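(* Let $\psi$ be an Orlicz function satisfying the $\Delta^2$-Condition and let $a>1$. Then there exist $C>0$ and $x_1>0$ such that $\psi^{-1}(x^a)\le C\,\psi^{-1}(x)$ for all $x\ge x_1$. Consequently, for any $\alpha>-1$, $N\ge1$ and any holomorphic $\phi:\mathbb{B}_N\to\mathbb{B}_N$, $$\lim_{|z|\to1}\frac{\psi^{-1}\big(1/(1-|\phi(z)|)^{N+\alpha+1}\big)}{\psi^{-1}\big(1/(1-|z|)^{N+\alpha+1}\big)}=0\iff\lim_{|z|\to1}\frac{\psi^{-1}\big(1/(1-|\phi(z)|)\big)}{\psi^{-1}\big(1/(1-|z|)\big)}=0.$$
   Context: An Orlicz function is a strictly convex $\psi:[0,\infty)\to[0,\infty)$ with $\psi(0)=0$, continuous at $0$, and $\psi(x)/x\to\infty$; $\psi^{-1}$ denotes its inverse. $\psi$ satisfies the $\Delta^2$-Condition if there exist $C>0$, $x_0>0$ with $\psi(x)^2\le\psi(Cx)$ for all $x\ge x_0$. $\mathbb{B}_N$ is the open unit ball of $\mathbb{C}^N$. *)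

From Stdlib Require Import Reals Lra.
Open Scope R_scope.

(** Orlicz functions, represented as psi : R -> R, only its values on [0,oo) matter. *)
Definition Orlicz (psi : R -> R) : Prop :=
  (forall x, 0 <= x -> 0 <= psi x) /\
  psi 0 = 0 /\
  (forall x y t, 0 <= x -> 0 <= y -> x <> y -> 0 < t < 1 ->
      psi (t * x + (1 - t) * y) < t * psi x + (1 - t) * psi y) /\
  (forall eps, 0 < eps -> exists d, 0 < d /\
      forall x, 0 <= x < d -> Rabs (psi x) < eps) /\
  (forall M, exists X, 0 < X /\ forall x, X <= x -> M <= psi x / x).

Definition is_Orlicz_inverse (psi psiinv : R -> R) : Prop :=
  forall y, 0 <= y -> 0 <= psiinv y /\ psi (psiinv y) = y.

Definition Delta2 (psi : R -> R) : Prop :=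
  exists C x0, 0 < C /\ 0 < x0 /\
    forall x, x0 <= x -> (psi x) ^ 2 <= psi (C * x).

(** C^N: vectors z : nat -> R*R (real part, imaginary part), whose coordinates
    of index >= N are required to vanish. *)
Definition cvec := nat -> (R * R).

Fixpoint sumN (N : nat) (f : nat -> R) : R :=
  match N with O => 0 | S n => sumN n f + f n end.

Definition cmul (a b : R * R) : R * R :=
  (fst a * fst b - snd a * snd b, fst a * snd b + snd a * fst b).
Definition cadd (a b : R * R) : R * R := (fst a + fst b, snd a + snd b).
Definition csub (a b : R * R) : R * R := (fst a - fst b, snd a - snd b).
Definition cabs2 (a : R * R) : R := fst a ^ 2 + snd a ^ 2.

Definition supported (N : nat) (z : cvec) : Prop :=
  forall k, (N <= k)%nat -> z k = (0, 0).

Definition vnorm (N : nat) (z : cvec) : R := sqrt (sumN N (fun k => cabs2 (z k))).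

Definition inBall (N : nat) (z : cvec) : Prop := supported N z /\ vnorm N z < 1.

Definition vadd (z w : cvec) : cvec := fun k => cadd (z k) (w k).
Definition vsub (z w : cvec) : cvec := fun k => csub (z k) (w k).

Definition mxapp (N : nat) (L : nat -> nat -> R * R) (h : cvec) : cvec :=
  fun j => if Nat.ltb j N then
     (sumN N (fun k => fst (cmul (L j k) (h k))),
      sumN N (fun k => snd (cmul (L j k) (h k))))
   else (0, 0).

Definition holomorphic_on_ball (N : nat) (phi : cvec -> cvec) : Prop :=
  forall z, inBall N z -> exists L : nat -> nat -> R * R,
    forall eps, 0 < eps -> exists delta, 0 < delta /\
      forall h, supported N h -> 0 < vnorm N h < delta -> inBall N (vadd z h) ->
        vnorm N (vsub (vsub (phi (vadd z h)) (phi z)) (mxapp N L h))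
          <= eps * vnorm N h.

Definition holo_self_map (N : nat) (phi : cvec -> cvec) : Prop :=
  holomorphic_on_ball N phi /\ (forall z, inBall N z -> inBall N (phi z)).

Definition lim_boundary_zero (N : nat) (f : cvec -> R) : Prop :=
  forall eps, 0 < eps -> exists delta, 0 < delta /\
    forall z, inBall N z -> 1 - vnorm N z < delta -> Rabs (f z) < eps.

(** Iterating the Delta^2-Condition n times gives psi (C^n psi^-1 x) >= x^(n+1) for large x,
    i.e. psi^-1 (x^(n+1)) <= C^n psi^-1 x; monotonicity of psi^-1 then handles any real
    exponent a <= n+1 and the bounded range [1, x1].  For the two boundary limits, write
    u = 1/(1-|phi z|) and v = 1/(1-|z|), both >= 1: then psi^-1 u <= psi^-1 (u^a) <= C psi^-1 u
    and likewise for v, so each of the two quotients is at most C times the other. *)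

From Stdlib Require Import Reals Lra Lia ZArith.
Open Scope R_scope.

Lemma exists_nat_succ_ge : forall a, exists n : nat, a <= INR (S n).
Proof.
  intro a. destruct (archimed a) as [Hup _].
  destruct (Rle_lt_dec a 0) as [Ha|Ha].
  - exists O. simpl. lra.
  - exists (Z.to_nat (up a)).
    rewrite S_INR, INR_IZR_INZ, Z2Nat.id; [lra|].
    apply le_IZR. lra.
Qed.

Lemma bound_on_ge1_of_eventual (f g : R -> R) (X C : R) :
  1 <= X -> 0 < C ->
  (forall x y, 1 <= x -> x <= y -> g x <= g y) ->
  (forall x y, 1 <= x -> x <= y -> f x <= f y) ->
  (forall x, 1 <= x -> 0 < f x) ->
  (forall x, X <= x -> g x <= C * f x) ->
  exists C', 0 < C' /\ forall x, 1 <= x -> g x <= C' * f x.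
Proof.
  intros HX HC Hg Hf Hfpos Hev.
  assert (Hf1 := Hfpos 1 (Rle_refl 1)).
  exists (Rmax C (g X / f 1)). split; [eapply Rlt_le_trans; [exact HC|apply Rmax_l]|].
  intros x Hx. destruct (Rle_lt_dec X x) as [HXx|HxX].
  - eapply Rle_trans; [exact (Hev x HXx)|].
    apply Rmult_le_compat_r; [left; apply Hfpos; lra|apply Rmax_l].
  - (* on [1, X]: g x <= g X = (g X / f 1) f 1 <= (g X / f 1) f x *)
    set (k := g X / f 1).
    assert (HgX : g X = k * f 1) by (unfold k; field; lra).
    assert (Hgx : g x <= g X) by (apply Hg; lra).
    assert (Hf1x := Hf 1 x (Rle_refl 1) Hx).
    assert (Hk := Rmax_r C k). assert (HCk := Rmax_l C k).
    assert (Hfx := Hfpos x Hx).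
    destruct (Rle_lt_dec 0 k); nra.
Qed.

Section OrliczFunction.

Variable psi : R -> R.
Hypothesis Hpsi : Orlicz psi.

Lemma Orlicz_lt : forall x y, 0 <= x -> x < y -> psi x < psi y.
Proof.
  intros x y Hx Hxy.
  destruct Hpsi as [Hnn [H0 [Hconv _]]].
  assert (Hy : 0 < y) by lra.
  (* strict convexity between 0 and y, at the point x = (x/y) y + (1 - x/y) 0 *)
  destruct (Req_dec x 0) as [->|Hx0].
  - rewrite H0.
    assert (Hmid := Hconv y 0 (/2) (Rlt_le _ _ Hy) (Rle_refl 0) ltac:(lra) ltac:(lra)).
    rewrite H0 in Hmid. replace (/2 * y + (1 - /2) * 0) with (y / 2) in Hmid by field.
    assert (0 <= psi (y / 2)) by (apply Hnn; lra). lra.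
  - assert (Ht : 0 < x / y < 1).
    { split; [apply Rdiv_lt_0_compat; lra|].
      apply (Rmult_lt_reg_r y); [lra|]. field_simplify; lra. }
    assert (Hx' := Hconv y 0 (x / y) (Rlt_le _ _ Hy) (Rle_refl 0) ltac:(lra) Ht).
    rewrite H0 in Hx'.
    replace (x / y * y + (1 - x / y) * 0) with x in Hx' by (field; lra).
    assert (x / y * psi y <= psi y).
    { rewrite <- (Rmult_1_l (psi y)) at 2.
      apply Rmult_le_compat_r; [apply Hnn|]; lra. }
    lra.
Qed.

Lemma Orlicz_le_inv : forall x y, 0 <= x -> 0 <= y -> psi x <= psi y -> x <= y.
Proof.
  intros x y Hx Hy Hle. destruct (Rle_lt_dec x y) as [|Hyx]; [assumption|].
  assert (psi y < psi x) by (apply Orlicz_lt; lra). lra.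
Qed.

Variable psiinv : R -> R.
Hypothesis Hinv : is_Orlicz_inverse psi psiinv.

Lemma psiinv_le_of_le_psi : forall y w, 0 <= y -> 0 <= w -> y <= psi w -> psiinv y <= w.
Proof.
  intros y w Hy Hw Hle. destruct (Hinv y Hy) as [Hy0 Hyinv].
  apply Orlicz_le_inv; lra.
Qed.

Lemma psiinv_ge_of_psi_le : forall y w, 0 <= y -> 0 <= w -> psi w <= y -> w <= psiinv y.
Proof.
  intros y w Hy Hw Hle. destruct (Hinv y Hy) as [Hy0 Hyinv].
  apply Orlicz_le_inv; lra.
Qed.

Lemma psiinv_le : forall s t, 0 <= s -> s <= t -> psiinv s <= psiinv t.
Proof.
  intros s t Hs Hst. destruct (Hinv s Hs) as [Hs0 Hsinv].
  apply psiinv_ge_of_psi_le; lra.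
Qed.

Lemma psiinv_gt0 : forall y, 0 < y -> 0 < psiinv y.
Proof.
  intros y Hy. destruct (Hinv y (Rlt_le _ _ Hy)) as [Hy0 Hyinv].
  destruct Hpsi as [_ [H0 _]].
  destruct (Req_dec (psiinv y) 0) as [E|E]; [rewrite E in Hyinv|]; lra.
Qed.

Lemma psiinv_le_Rpower : forall x a, 1 <= x -> 1 <= a -> psiinv x <= psiinv (Rpower x a).
Proof.
  intros x a Hx Ha. apply psiinv_le; [lra|].
  rewrite <- (Rpower_1 x) at 1 by lra. apply Rle_Rpower; lra.
Qed.

Section Delta2Iteration.

Variables C0 x0 : R.
Hypothesis HC0 : 0 < C0.
Hypothesis Hx0 : 0 < x0.
Hypothesis HD2 : forall x, x0 <= x -> psi x ^ 2 <= psi (C0 * x).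

Lemma Delta2_iter : forall x, Rmax 1 (psi x0) <= x -> forall n,
  x0 <= C0 ^ n * psiinv x /\ x ^ S n <= psi (C0 ^ n * psiinv x).
Proof.
  intros x Hx.
  assert (Hx1 : 1 <= x) by (eapply Rle_trans; [apply Rmax_l|exact Hx]).
  assert (Hpx0 : psi x0 <= x) by (eapply Rle_trans; [apply Rmax_r|exact Hx]).
  destruct (Hinv x ltac:(lra)) as [Hxinv0 Hxinv].
  induction n as [|n [IHx0 IHpow]].
  - rewrite pow_O, pow_1, Rmult_1_l, Hxinv.
    split; [apply psiinv_ge_of_psi_le|]; lra.
  - set (w := C0 ^ n * psiinv x) in *.
    replace (C0 ^ S n * psiinv x) with (C0 * w) by (unfold w; simpl; ring).
    assert (Hsq := HD2 w IHx0).
    assert (Hpow1 : 1 <= x ^ S n) by (apply pow_R1_Rle; lra).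
    assert (Hpsiw : psi w <= psi (C0 * w)) by nra.
    split.
    + assert (w <= C0 * w) by (apply Orlicz_le_inv; [lra|nra|exact Hpsiw]). lra.
    + change (x ^ S (S n)) with (x * x ^ S n).
      assert (x <= x ^ S n).
      { rewrite <- (pow_1 x) at 1. apply Rle_pow; [lra|lia]. }
      nra.
Qed.

Lemma psiinv_pow_le : forall x, Rmax 1 (psi x0) <= x -> forall n,
  psiinv (x ^ S n) <= C0 ^ n * psiinv x.
Proof.
  intros x Hx n. destruct (Delta2_iter x Hx n) as [Hge Hpow].
  assert (1 <= x) by (eapply Rle_trans; [apply Rmax_l|exact Hx]).
  assert (1 <= x ^ S n) by (apply pow_R1_Rle; lra).
  apply psiinv_le_of_le_psi; lra.
Qed.

End Delta2Iteration.

Lemma psiinv_Rpower_le : Delta2 psi -> forall a, 1 < a -> exists C, 0 < C /\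
  forall x, 1 <= x -> psiinv (Rpower x a) <= C * psiinv x.
Proof.
  intros [C0 [x0 [HC0 [Hx0 HD2]]]] a Ha.
  destruct (exists_nat_succ_ge a) as [n Hn].
  set (X := Rmax 1 (psi x0)).
  apply (bound_on_ge1_of_eventual psiinv (fun x => psiinv (Rpower x a)) X (C0 ^ n)).
  - apply Rmax_l.
  - apply pow_lt; lra.
  - intros x y Hx Hxy. apply psiinv_le; [left; apply exp_pos|apply Rle_Rpower_l; lra].
  - intros x y Hx Hxy. apply psiinv_le; lra.
  - intros x Hx. apply psiinv_gt0; lra.
  - intros x HXx.
    assert (1 <= x) by (eapply Rle_trans; [apply Rmax_l|exact HXx]).
    apply Rle_trans with (psiinv (x ^ S n)); [|exact (psiinv_pow_le C0 x0 HC0 Hx0 HD2 x HXx n)].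
    apply psiinv_le; [left; apply exp_pos|].
    rewrite <- Rpower_pow by lra. apply Rle_Rpower; lra.
Qed.

End OrliczFunction.

Lemma div_le_mul_div (x y x' y' c d : R) :
  0 <= x -> 0 < y -> 0 < y' -> x <= c * x' -> y' <= d * y -> x / y <= c * d * (x' / y').
Proof.
  intros Hx Hy Hy' Hnum Hden.
  assert (Hnum' : x * y' <= c * x' * y') by (apply Rmult_le_compat_r; lra).
  assert (Hden' : c * x' * y' <= c * x' * (d * y)) by (apply Rmult_le_compat_l; lra).
  apply (Rmult_le_reg_r (y * y')); [nra|].
  replace (x / y * (y * y')) with (x * y') by (field; lra).
  replace (c * d * (x' / y') * (y * y')) with (c * x' * (d * y)) by (field; lra).
  lra.
Qed.

Lemma lim_boundary_zero_le (N : nat) (f g : cvec -> R) (C : R) : 0 < C ->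
  (forall z, inBall N z -> 0 <= f z <= C * g z) ->
  lim_boundary_zero N g -> lim_boundary_zero N f.
Proof.
  intros HC Hfg Hg eps Heps.
  destruct (Hg (eps / C) ltac:(apply Rdiv_lt_0_compat; lra)) as [d [Hd Hgd]].
  exists d. split; [exact Hd|]. intros z Hz Hzd.
  specialize (Hgd z Hz Hzd). destruct (Hfg z Hz) as [Hf0 Hfle].
  assert (Hgz : Rabs (g z) * C < eps)
    by (apply (Rmult_lt_compat_r C) in Hgd; [|exact HC]; field_simplify in Hgd; lra).
  assert (Hgabs := Rle_abs (g z)).
  rewrite Rabs_right by lra. nra.
Qed.

Lemma inv_one_minus_vnorm_ge1 (N : nat) (z : cvec) : inBall N z -> 1 <= 1 / (1 - vnorm N z).
Proof.
  intros [_ Hz]. assert (0 <= vnorm N z) by apply sqrt_pos.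
  apply (Rmult_le_reg_l (1 - vnorm N z)); [lra|]. field_simplify; lra.
Qed.

Theorem mainTheorem8 (psi psiinv : R -> R)
  (Hpsi : Orlicz psi) (Hinv : is_Orlicz_inverse psi psiinv) (HD : Delta2 psi) :
  (forall a, 1 < a -> exists C x1, 0 < C /\ 0 < x1 /\
      forall x, x1 <= x -> psiinv (Rpower x a) <= C * psiinv x) /\
  (forall (alpha : R) (N : nat) (phi : cvec -> cvec),
      -1 < alpha -> (1 <= N)%nat -> holo_self_map N phi ->
      (lim_boundary_zero N (fun z =>
          psiinv (Rpower (1 / (1 - vnorm N (phi z))) (INR N + alpha + 1))
          / psiinv (Rpower (1 / (1 - vnorm N z)) (INR N + alpha + 1)))
       <->
       lim_boundary_zero N (fun z =>
          psiinv (1 / (1 - vnorm N (phi z))) / psiinv (1 / (1 - vnorm N z))))).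
Proof.
  split.
  - intros a Ha. destruct (psiinv_Rpower_le psi Hpsi psiinv Hinv HD a Ha) as [C [HC Hle]].
    exists C, 1. repeat split; [exact HC|lra|exact Hle].
  - intros alpha N phi Halpha HN [_ Hmap].
    set (a := INR N + alpha + 1).
    assert (Ha : 1 < a) by (unfold a; apply le_INR in HN; simpl in HN; lra).
    destruct (psiinv_Rpower_le psi Hpsi psiinv Hinv HD a Ha) as [C [HC Hle]].
    assert (Hsandwich : forall y, 1 <= y ->
      0 < psiinv y <= psiinv (Rpower y a) /\ psiinv (Rpower y a) <= C * psiinv y).
    { intros y Hy. repeat split;
        [apply (psiinv_gt0 psi Hpsi psiinv Hinv); lra
        |apply (psiinv_le_Rpower psi Hpsi psiinv Hinv); lra
        |auto]. }
    split; apply lim_boundary_zero_le with C; try exact HC; intros z Hz;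
      destruct (Hsandwich _ (inv_one_minus_vnorm_ge1 N (phi z) (Hmap z Hz))) as [[Hu0 Hu1] Hu2];
      destruct (Hsandwich _ (inv_one_minus_vnorm_ge1 N z Hz)) as [[Hv0 Hv1] Hv2];
      (split; [apply Rle_mult_inv_pos; lra|]).
    + rewrite <- (Rmult_1_l C) at 1. apply div_le_mul_div; lra.
    + rewrite <- (Rmult_1_r C) at 1. apply div_le_mul_div; lra.
Qed.
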